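(* Let $q\in\mathbb R$ and let $\mu$ be a compactly supported Borel probability measure on $\mathbb R^n$ satisfying the doubling condition. Then for every $E\subseteq\operatorname{supp}\mu$, $\mathsf B^q_\mu(E)=\operatorname{Dim}^q_\mu(E)$.
   Context: $B(x,r)$ is the closed ball. $\mu$ satisfies the doubling condition if $\limsup_{r\searrow0}\sup_{x\in\operatorname{supp}\mu}\mu(B(x,2r))/\mu(B(x,r))<\infty$. Hewitt–Stromberg side: a centred packing of $E$ by $r$-balls is a family $(B(x_i,r))_i$ of pairwise disjoint closed balls with $x_i\in E$; $M^q_{\mu,r}(E)=\sup\sum_i\mu(B(x_i,r))^q$ over such packings; $\mathsf C^{q,t}_\mu(E)=\limsup_{r\to0}M^q_{\mu,r}(E)(2r)^t$; $\mathsf P^{q,t}_\mu(E)=\inf\{\sum_i\mathsf C^{q,t}_\mu(E_i):E\subseteq\bigcup_iE_i,\ E_i\text{ bounded}\}$; $\mathsf B^q_\mu(E)$ is the unique $t$ with $\mathsf P^{q,s}_\mu(E)=\infty$ for $s<t$ and $=0$ for $s>t$. Olsen's multifractal packing side: a centred $\delta$-packing of $E$ is a family $(B(x_i,r_i))_i$ of pairwise disjoint closed balls with $x_i\in E$ and $r_i\le\delta$; $\overline{\mathcal P}^{q,t}_\mu(E)=\inf_{\delta>0}\sup\sum_i\mu(B(x_i,r_i))^q(2r_i)^t$ (sup over centred $\delta$-packings of $E$); $\mathcal P^{q,t}_\mu(E)=\inf\{\sum_i\overline{\mathcal P}^{q,t}_\mu(E_i):E\subseteq\bigcup_iE_i\}$;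 $\operatorname{Dim}^q_\mu(E)=\inf\{t:\mathcal P^{q,t}_\mu(E)=0\}=\sup\{t:\mathcal P^{q,t}_\mu(E)=\infty\}$. *)

(* R^n is modelled as 'rV[R]_n with the Euclidean
   distance; Borel sets are the sigma-algebra generated by the open sets. *)
From HB Require Import structures.
From mathcomp Require Import all_boot all_order all_algebra.
From mathcomp Require Import all_classical all_reals all_analysis.
Set Implicit Arguments. Unset Strict Implicit. Unset Printing Implicit Defensive.
Import Order.TTheory GRing.Theory Num.Theory.
Import numFieldTopology.Exports numFieldNormedType.Exports.
Local Open Scope classical_set_scope.
Local Open Scope ring_scope.

Section Defs.
Variables (R : realType) (n : nat).
Local Notation Rn := 'rV[R]_n.

Definition BorelRn := g_sigma_algebraType (open : set_system Rn).

Definition edist (x y : Rn) : R := Num.sqrt (\sum_(i < n) (x ord0 i - y ord0 i) ^+ 2).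
Definition cball (x : Rn) (r : R) : set Rn := [set y | edist x y <= r].

Definition ebounded (S : set Rn) : Prop := exists (c : Rn) (M : R), S `<=` cball c M.

Variable mu : set Rn -> \bar R.

Definition supp : set Rn := [set x | forall U : set Rn, open U -> U x -> (0 < mu U)%E].

(* doubling: limsup_{r->0} sup_{x in supp} mu(B(x,2r))/mu(B(x,r)) < oo *)
Definition doubling : Prop := exists (C d : R), 0 < d /\
  forall (r : R) (x : Rn), 0 < r < d -> supp x ->
    fine (mu (cball x (2 * r))) / fine (mu (cball x r)) <= C.

Definition hs_packing (E : set Rn) (r : R) (P : set Rn) : Prop :=
  P `<=` E /\ forall x y, P x -> P y -> x <> y -> cball x r `&` cball y r = set0.

Definition Mq (q r : R) (E : set Rn) : \bar R :=
  ereal_sup [set (\esum_(x in P) ((fine (mu (cball x r))) `^ q)%:E)%E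
            | P in [set P | hs_packing E r P]].

(* C^{q,t}(E) = limsup_{r -> 0+} M^q_r(E) (2r)^t *)
Definition Cqt (q t : R) (E : set Rn) : \bar R :=
  ereal_inf [set ereal_sup [set (Mq q r E * ((2 * r) `^ t)%:E)%E | r in [set r | 0 < r < d]]
            | d in [set d : R | 0 < d]].

Definition HSPqt (q t : R) (E : set Rn) : \bar R :=
  ereal_inf [set (\sum_(i <oo) Cqt q t (F i))%E
            | F in [set F : nat -> set Rn | E `<=` \bigcup_i F i /\ forall i, ebounded (F i)]].

Definition Bq (q : R) (E : set Rn) : \bar R :=
  ereal_inf [set t%:E | t in [set t : R | HSPqt q t E = 0%E]].

Definition ol_packing (E : set Rn) (delta : R) (P : set (Rn * R)) : Prop :=
  (forall p, P p -> E p.1 /\ 0 < p.2 <= delta) /\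
  forall p p', P p -> P p' -> p <> p' -> cball p.1 p.2 `&` cball p'.1 p'.2 = set0.

Definition Pbar (q t : R) (E : set Rn) : \bar R :=
  ereal_inf [set ereal_sup
               [set (\esum_(p in P) ((fine (mu (cball p.1 p.2))) `^ q * (2 * p.2) `^ t)%:E)%E
               | P in [set P | ol_packing E delta P]]
            | delta in [set delta : R | 0 < delta]].

Definition OlPqt (q t : R) (E : set Rn) : \bar R :=
  ereal_inf [set (\sum_(i <oo) Pbar q t (F i))%E
            | F in [set F : nat -> set Rn | E `<=` \bigcup_i F i]].

Definition Dimq (q : R) (E : set Rn) : \bar R :=
  ereal_inf [set t%:E | t in [set t : R | OlPqt q t E = 0%E]].

End Defs.

From Pilot Require Import Defs.
From HB Require Import structures.
From mathcomp Require Import all_boot all_order all_algebra.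
From mathcomp Require Import all_classical all_reals all_analysis.
From mathcomp Require Import ring.
Import Order.TTheory GRing.Theory Num.Theory.
Local Open Scope classical_set_scope.
Local Open Scope ring_scope.
Import numFieldTopology.Exports numFieldNormedType.Exports.
Set Implicit Arguments. Unset Strict Implicit. Unset Printing Implicit Defensive.

(* A packing by balls of one radius r is a centred delta-packing for every
   delta > r, so C^{q,t} <= Pbar^{q,t}; covering E by pieces of the bounded
   support gives HS-P^{q,t}(E) <= P^{q,t}(E), hence B^q <= Dim^q.
   Conversely, let C^{q,t}(F) < oo and s > 0.  Split a centred delta-packing
   of F into the dyadic layers rho_j < r <= 2 rho_j, rho_j = delta 2^{-j-1}.
   By doubling, mu(B(x,r))^q (2r)^{t+s} <= K (4 rho_j)^s mu(B(x,rho_j))^q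
   (2 rho_j)^t for a ball of the j-th layer, and the centres of a layer form a
   packing by rho_j-balls, so the layer contributes O((2 delta)^s 2^{-js}).
   Summing over j, Pbar^{q,t+s}(F) = O(delta^s) = 0.  Hence HS-P^{q,t}(E) = 0
   forces P^{q,t+s}(E) = 0, and Dim^q <= B^q. *)

Section EuclideanBalls.
Variables (R : realType) (n : nat).
Local Notation Rn := 'rV[R]_n.

Lemma edistxx (x : Rn) : Defs.edist x x = 0.
Proof. by rewrite /Defs.edist big1 ?sqrtr0// => i _; rewrite subrr expr2 mulr0. Qed.

Lemma edist_continuous (x : Rn) : continuous (Defs.edist x).
Proof.
move=> y; apply: continuous_comp; last exact: sqrt_continuous.
move: y; apply: continuous_big => [|i _ z]; first exact: add_continuous.
have dxi : {for z, continuous (fun y : Rn => x ord0 i - y ord0 i)}.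
  by apply: continuousB; [exact: cst_continuous | exact: (@coord_continuous R 1 n ord0 i)].
by have := continuousM dxi dxi.
Qed.

Lemma closed_cball (x : Rn) (r : R) : closed (cball x r).
Proof.
rewrite (_ : cball x r = Defs.edist x @^-1` [set z | z <= r]) //.
by apply: closed_comp; [move=> z _; exact: edist_continuous | exact: closed_le].
Qed.

Lemma compact_ebounded (S : set Rn) : compact S -> ebounded S.
Proof.
move=> cS; have /compact_bounded[M [_ HM]] : compact (Defs.edist 0 @` S).
  by apply: continuous_compact => //; apply: continuous_subspaceT; exact: edist_continuous.
exists 0, (M + 1) => y Sy; rewrite /cball /=.
apply: le_trans (ler_norm _) (HM (M + 1) _ _ (ex_intro2 _ _ y Sy erefl)).
by rewrite ltrDl.
Qed.

End EuclideanBalls.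

Section BallMeasure.
Variables (R : realType) (n : nat).
Local Notation Rn := 'rV[R]_n.
Variable mu : {measure set (BorelRn R n) -> \bar R}.
Hypothesis mu_fin : (mu setT < +oo)%E.
Local Notation mass x r := (fine (mu (cball x r : set (BorelRn R n)))).

Lemma measurable_cball (x : Rn) (r : R) :
  measurable (cball x r : set (BorelRn R n)).
Proof.
rewrite -(setCK (cball x r)); apply: measurableC; apply: sub_sigma_algebra.
exact/closed_openC/closed_cball.
Qed.

Lemma fin_num_measure_cball (x : Rn) (r : R) :
  mu (cball x r : set (BorelRn R n)) \is a fin_num.
Proof.
rewrite ge0_fin_numE//; apply: le_lt_trans mu_fin.
by apply: le_measure; rewrite ?inE//; exact: measurable_cball.
Qed.

Lemma fine_measure_cball_le (x : Rn) (r r' : R) : r <= r' -> mass x r <= mass x r'.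
Proof.
move=> rr'; apply: fine_le; rewrite ?fin_num_measure_cball//.
apply: le_measure; rewrite ?inE; try exact: measurable_cball.
by move=> y /= /le_trans; apply.
Qed.

Lemma fine_measure_cball_gt0 (x : Rn) (r : R) :
  supp (mu : set Rn -> \bar R) x -> 0 < r -> 0 < mass x r.
Proof.
move=> sx r0; apply: fine_gt0; rewrite -ge0_fin_numE ?fin_num_measure_cball ?andbT//.
have oU : open (Defs.edist x @^-1` [set z | z < r]).
  by apply: open_comp; [move=> z _; exact: edist_continuous | exact: open_lt].
apply: (lt_le_trans (sx _ oU _)); first by rewrite /= edistxx.
apply: le_measure; rewrite ?inE; [exact: sub_sigma_algebra | exact: measurable_cball |].
by move=> y /= /ltW.
Qed.

End BallMeasure.

Section RealLemmas.
Variable R : realType.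

Lemma powR_le_comparable (q a b c : R) : 0 < a -> 1 <= c -> a <= b <= c * a ->
  b `^ q <= (c `^ q + 1) * a `^ q.
Proof.
move=> a0 c1 /andP[ab bca]; have b0 := lt_le_trans a0 ab.
have c0 : 0 <= c by apply: le_trans c1.
case: (leP 0 q) => q0.
  apply: (@le_trans _ _ ((c * a) `^ q)).
    by apply: ge0_ler_powR; rewrite // nnegrE ?mulr_ge0 ?(ltW a0) ?(ltW b0).
  by rewrite powRM ?(ltW a0)// ler_pM2r ?powR_gt0// lerDl.
apply: (@le_trans _ _ (a `^ q)); last by rewrite ler_peMl ?powR_ge0// lerDr powR_ge0.
by rewrite /powR !gt_eqF// ler_expR ler_nM2l// ler_ln ?posrE.
Qed.

Lemma powR_mulXn (a x s : R) (j : nat) : 0 <= a -> 0 <= x ->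
  (a * x ^+ j) `^ s = a `^ s * (x `^ s) ^+ j.
Proof.
move=> a0 x0; rewrite powRM ?exprn_ge0// -!powR_mulrn ?powR_ge0//.
by rewrite powRAC.
Qed.

Lemma powR_lt1 (x s : R) : 0 <= x < 1 -> 0 < s -> x `^ s < 1.
Proof.
move=> /andP[x0 x1] s0; have := @gt0_ltr_powR R s s0 x 1.
by rewrite powR1; apply; rewrite ?nnegrE.
Qed.

Lemma powR_small (B s e d : R) : 0 <= B -> 0 < s -> 0 < e -> 0 < d ->
  exists delta, 0 < delta <= d /\ B * (2 * delta) `^ s <= e.
Proof.
move=> B0 s0 e0 d0; pose eta := e / (B + 1).
have eta0 : 0 < eta by rewrite divr_gt0// ltr_wpDl.
exists (Num.min d (eta `^ s^-1 / 2)); split.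
  by rewrite lt_min d0 divr_gt0 ?powR_gt0//= ge_min lexx.
apply: (@le_trans _ _ (B * eta)).
  apply: ler_wpM2l => //; apply: (@le_trans _ _ ((eta `^ s^-1) `^ s)).
    apply: ge0_ler_powR; rewrite ?nnegrE ?(ltW s0) ?mulr_ge0 ?powR_ge0//.
      by rewrite le_min (ltW d0) divr_ge0 ?powR_ge0.
    by rewrite mulrC -ler_pdivlMr// ge_min lexx orbT.
  by rewrite -powRrM mulVf ?gt_eqF// powRr1// ltW.
by rewrite /eta mulrA ler_pdivrMr ?ltr_wpDl// [leRHS]mulrC ler_pM2r// lerDl.
Qed.

Lemma dyadic_scale (d r : R) : 0 < r <= d -> exists j, d / 2 ^+ j.+1 < r <= d / 2 ^+ j.
Proof.
move=> /andP[r0 rd]; have d0 := lt_le_trans r0 rd.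
have [|j jr jmin] := ex_minnP (P := fun j => d / 2 ^+ j.+1 < r).
  exists (Num.bound (d / r)); rewrite ltr_pdivrMr ?exprn_gt0// -ltr_pdivrMl//.
  rewrite mulrC; apply: (lt_le_trans (archi_boundP (ltW (divr_gt0 d0 r0)))).
  by rewrite -natrX ler_nat (leq_trans (ltnW (ltn_expl _ (ltnSn 1)))) ?leq_pexp2l.
exists j; rewrite jr /=; case: j jr jmin => [|j] _ jmin; first by rewrite divr1.
by rewrite leNgt; apply/negP => /jmin; rewrite ltnn.
Qed.

Lemma dyadic_scale_uniq (d r : R) (i j : nat) : 0 < d ->
  d / 2 ^+ i.+1 < r <= d / 2 ^+ i -> d / 2 ^+ j.+1 < r <= d / 2 ^+ j -> i = j.
Proof.
have lt_scale k k' : 0 < d -> (k < k')%N ->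
    d / 2 ^+ k.+1 < r -> r <= d / 2 ^+ k' -> False.
  move=> d0 kk' h1 h2; have := lt_le_trans h1 h2.
  by rewrite ltr_pM2l// ltf_pV2 ?posrE ?exprn_gt0// ltr_eXn2l ?ltr1n// ltnNge kk'.
move=> d0 /andP[i1 i2] /andP[j1 j2]; case: (ltngtP i j) => // ij.
- by case: (lt_scale i j d0 ij i1 j2).
- by case: (lt_scale j i d0 ij j1 i2).
Qed.

Lemma nneseries_geometric_le (D th : R) : 0 <= D -> 0 < th < 1 ->
  (\sum_(j <oo) (D * th ^+ j)%:E <= (D / (1 - th))%:E)%E.
Proof.
move=> D0 /andP[th0 th1]; apply: lime_le.
  by apply: is_cvg_nneseries => k _ _; rewrite lee_fin mulr_ge0// exprn_ge0// ltW.
apply: nearW => N /=; rewrite sumEFin lee_fin.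
by apply: geometric_le_lim; rewrite // ger0_norm// ltW.
Qed.

End RealLemmas.

Lemma esumZl (R : realType) (T : choiceType) (P : set T) (f : T -> \bar R) (c : R) :
  0 < c -> (forall x, (0 <= f x)%E) ->
  (c%:E * \esum_(x in P) f x)%E = \esum_(x in P) (c%:E * f x)%E.
Proof.
move=> c0 f0; rewrite /esum -ereal_sup_pZl// image_comp; congr ereal_sup.
by apply: eq_imagel => A [finA _] /=; rewrite ge0_mule_fsumr.
Qed.

Section Packings.
Variables (R : realType) (n : nat).
Local Notation Rn := 'rV[R]_n.
Variable m : set Rn -> \bar R.
Local Notation mass x r := (fine (m (cball x r))).
Local Open Scope ereal_scope.

Lemma Mq_ge0 q r E : 0 <= Mq m q r E.
Proof.
apply: ereal_sup_ge; exists 0 => //; exists set0; last exact: esum_set0.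
by split => // x y [].
Qed.

Lemma Cqt_ge0 q t E : 0 <= Cqt m q t E.
Proof.
apply: le_ereal_inf_tmp => _ [d /= d0 <-]; apply: ereal_sup_ge.
exists (Mq m q (d / 2)%R E * ((2 * (d / 2)) `^ t)%:E).
  by exists (d / 2)%R; rewrite //= divr_gt0// ltr_pdivrMr// ltr_pMr// ltr1n.
by rewrite mule_ge0 ?Mq_ge0// lee_fin powR_ge0.
Qed.

Lemma Pbar_ge0 q t E : 0 <= Pbar m q t E.
Proof.
apply: le_ereal_inf_tmp => _ [d /= d0 <-]; apply: ereal_sup_ge.
exists 0 => //; exists set0; last exact: esum_set0.
by split => // p [].
Qed.

Lemma HSPqt_ge0 q t E : 0 <= HSPqt m q t E.
Proof.
apply: le_ereal_inf_tmp => _ [F _ <-]; apply: nneseries_ge0 => i _ _; exact: Cqt_ge0.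
Qed.

Lemma OlPqt_ge0 q t E : 0 <= OlPqt m q t E.
Proof.
apply: le_ereal_inf_tmp => _ [F _ <-]; apply: nneseries_ge0 => i _ _; exact: Pbar_ge0.
Qed.

Lemma Mq_subset q r (G F : set Rn) : G `<=` F -> Mq m q r G <= Mq m q r F.
Proof.
move=> GF; apply: ge_ereal_sup => _ [P [PG PP] <-]; apply: ereal_sup_ubound.
by exists P => //; split => //; exact: subset_trans PG GF.
Qed.

Lemma Cqt_subset q t (G F : set Rn) : G `<=` F -> Cqt m q t G <= Cqt m q t F.
Proof.
move=> GF; apply: le_ereal_inf_tmp => _ [d d0 <-]; apply: ge_ereal_inf.
eexists; first by exists d.
apply: ge_ereal_sup => _ [r hr <-]; apply: ereal_sup_ge.
eexists; first by exists r.
by apply: lee_wpmul2r; [rewrite lee_fin powR_ge0 | exact: Mq_subset].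
Qed.

Lemma Cqt_le_Pbar q t (G F : set Rn) : G `<=` F -> Cqt m q t G <= Pbar m q t F.
Proof.
move=> GF; apply: le_ereal_inf_tmp => _ [d /= d0 <-].
apply: ge_ereal_inf; eexists; first by exists d.
apply: ge_ereal_sup => _ [r /andP[r0 rd] <-].
have c0 : (0 < (2 * r) `^ t)%R by rewrite powR_gt0// mulr_gt0.
rewrite muleC /Mq -ereal_sup_pZl//.
apply: ge_ereal_sup => _ [_ [P [PG PP] <-] <-].
rewrite esumZl//; last by move=> x; rewrite lee_fin powR_ge0.
apply: ereal_sup_ge; exists (\esum_(p in (fun x => (x, r)) @` P)
   (mass p.1 p.2 `^ q * (2 * p.2) `^ t)%:E).
  exists ((fun x => (x, r)) @` P) => //; split.
    by move=> _ [x Px <-] /=; split; [exact/GF/PG | rewrite r0 ltW].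
  move=> _ _ [x Px <-] [y Py <-] /= xy; apply: PP => // exy.
  by apply: xy; rewrite exy.
rewrite esum_image; last by move=> x y _ _ [].
by apply: le_esum => x _ /=; rewrite -EFinM mulrC.
Qed.

Lemma HSPqt_le_OlPqt q t (S E : set Rn) : ebounded S -> E `<=` S ->
  HSPqt m q t E <= OlPqt m q t E.
Proof.
move=> [c [M SM]] ES; apply: le_ereal_inf_tmp => _ [F /= EF <-].
apply: (@le_trans _ _ (\sum_(i <oo) Cqt m q t (F i `&` S))).
  apply: ereal_inf_lbound; exists (fun i => F i `&` S) => //; split.
  - by move=> x Ex; have [i _ Fix] := EF x Ex; exists i => //; split => //; exact: ES.
  - by move=> i; exists c, M => x [_ /SM].
apply: lee_nneseries => [i _ _|i _]; first exact: Cqt_ge0.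
by apply: Cqt_le_Pbar; exact: subIsetl.
Qed.

Lemma ol_packing_subset (E : set Rn) (d : R) (P Q : set (Rn * R)) :
  ol_packing E d P -> Q `<=` P -> ol_packing E d Q.
Proof. by move=> [PE PP] QP; split => [p /QP/PE | p p' /QP Pp /QP Pp'] //; exact: PP. Qed.

Lemma ol_packing_centres (E : set Rn) (d rho : R) (P : set (Rn * R)) :
  ol_packing E d P -> (forall p, P p -> (rho < p.2)%R) ->
  hs_packing E rho (fst @` P) /\ set_inj P fst.
Proof.
move=> [PE PP] Prho; split; first split.
- by move=> _ [p Pp <-]; exact: (PE p Pp).1.
- move=> _ _ [p Pp <-] [p' Pp' <-] pp'.
  have /seteqP[PPp _] := PP p p' Pp Pp' (fun e => pp' (congr1 fst e)).
  apply/seteqP; split => // z [z1 z2]; apply: PPp.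
  by split; apply: le_trans (ltW (Prho _ _)).
- move=> p p'; rewrite !inE => Pp Pp' e; apply: contrapT => pp'.
  have /seteqP[PPp _] := PP p p' Pp Pp' pp'.
  have [/andP[/ltW p0 _] /andP[/ltW p'0 _]] := ((PE p Pp).2, (PE p' Pp').2).
  by apply: (PPp p.1); split; rewrite /cball /= ?e edistxx.
Qed.

End Packings.

Section Doubling.
Variables (R : realType) (n : nat).
Local Notation Rn := 'rV[R]_n.
Variable m : set Rn -> \bar R.
Local Notation mass x r := (fine (m (cball x r))).
Hypothesis mass_gt0 : forall (x : Rn) (r : R), supp m x -> 0 < r -> 0 < mass x r.
Hypothesis mass_le : forall (x : Rn) (r r' : R), r <= r' -> mass x r <= mass x r'.

Section Layers.
Variables (q t s C A d : R) (F : set Rn).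
Hypothesis F_supp : F `<=` supp m.
Hypotheses (s_gt0 : 0 < s) (C_ge1 : 1 <= C) (A_ge0 : 0 <= A).
Hypothesis mass_doubling :
  forall x r, supp m x -> 0 < r < d -> mass x (2 * r) <= C * mass x r.
Hypothesis Mq_bounded :
  forall r, 0 < r < d -> (Mq m q r F * ((2 * r) `^ t)%:E <= A%:E)%E.

Let K := (C `^ q + 1) * (2 `^ t + 1).

Let K_gt0 : 0 < K.
Proof. by rewrite mulr_gt0// ltr_wpDl ?powR_ge0. Qed.

Lemma mass_scale_le x r rho : supp m x -> 0 < rho < d -> rho < r <= 2 * rho ->
  mass x r `^ q * (2 * r) `^ (t + s) <=
  K * (2 * (2 * rho)) `^ s * (mass x rho `^ q * (2 * rho) `^ t).
Proof.
move=> sx /andP[rho0 rhod] /andP[rhor r2rho]; have r0 := lt_trans rho0 rhor.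
have mass_q : mass x r `^ q <= (C `^ q + 1) * mass x rho `^ q.
  apply: powR_le_comparable; rewrite ?mass_gt0// (mass_le _ (ltW rhor))/=.
  by apply: le_trans (mass_doubling sx _); rewrite ?mass_le ?rho0.
have diam_t : (2 * r) `^ t <= (2 `^ t + 1) * (2 * rho) `^ t.
  apply: powR_le_comparable; rewrite ?mulr_gt0 ?ler1n//.
  by rewrite !ler_pM2l// ltW.
have diam_s : (2 * r) `^ s <= (2 * (2 * rho)) `^ s.
  by apply: ge0_ler_powR; rewrite ?nnegrE ?mulr_ge0 ?(ltW s_gt0) ?(ltW r0) ?(ltW rho0)// ler_pM2l.
have r2 : 2 * r != 0 by rewrite mulf_neq0 ?gt_eqF.
rewrite powRD ?r2 ?implybT// mulrA.
apply: (le_trans (ler_pM (mulr_ge0 (powR_ge0 _ _) (powR_ge0 _ _)) (powR_ge0 _ _)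
  (ler_pM (powR_ge0 _ _) (powR_ge0 _ _) mass_q diam_t) diam_s)).
by rewrite /K le_eqVlt; apply/orP; left; apply/eqP; ring.
Qed.

Lemma layer_esum_le (delta rho : R) (P : set (Rn * R)) :
  ol_packing F delta P -> 0 < rho < d ->
  (\esum_(p in [set p | P p /\ (rho < p.2 <= 2 * rho)%R])
      (mass p.1 p.2 `^ q * (2 * p.2) `^ (t + s))%:E
    <= (K * (2 * (2 * rho)) `^ s * A)%:E)%E.
Proof.
move=> PF /andP[rho0 rhod]; set L := [set p | _].
have LF : ol_packing F delta L by apply: ol_packing_subset PF _ => p [].
have [LF' Linj] := ol_packing_centres LF (fun p => fun Lp => (andP Lp.2).1).
have c0 : 0 < K * (2 * (2 * rho)) `^ s by rewrite mulr_gt0// powR_gt0// !mulr_gt0.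
have t0 : 0 < (2 * rho) `^ t by rewrite powR_gt0// mulr_gt0.
apply: (@le_trans _ _ (\esum_(p in L) ((K * (2 * (2 * rho)) `^ s)%:E *
    ((2 * rho) `^ t)%:E * (mass p.1 rho `^ q)%:E))%E).
  apply: le_esum => p [Pp /andP[p1 p2]]; rewrite -!EFinM lee_fin.
  rewrite -mulrA [(2 * rho) `^ t * _]mulrC; apply: mass_scale_le; rewrite ?rho0 ?p1 //.
  exact/F_supp/(PF.1 p Pp).1.
rewrite -(esumZl _ (mulr_gt0 c0 t0)); last by move=> p; rewrite lee_fin powR_ge0.
rewrite EFinM [X in (_ <= X)%E]EFinM -muleA lee_pmul2l ?lte_fin//.
rewrite -(esum_image _ _ (fun x => (mass x rho `^ q)%:E) Linj) muleC.
apply: (le_trans _ (Mq_bounded (r := rho) _)); last by rewrite rho0 rhod.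
apply: lee_wpmul2r; first by rewrite lee_fin ltW.
by apply: ereal_sup_ubound; exists (fst @` L).
Qed.

Lemma packing_esum_le (delta : R) (P : set (Rn * R)) :
  0 < delta <= d -> ol_packing F delta P ->
  (\esum_(p in P) (mass p.1 p.2 `^ q * (2 * p.2) `^ (t + s))%:E
    <= (K * A * (2 * delta) `^ s / (1 - 2^-1 `^ s))%:E)%E.
Proof.
move=> /andP[delta0 deltad] PF.
pose rho j := delta / 2 ^+ j.+1.
have two_rho j : 2 * rho j = delta / 2 ^+ j.
  by rewrite /rho exprS; field; rewrite expf_neq0 ?pnatr_eq0.
pose L j := [set p | P p /\ rho j < p.2 <= 2 * rho j].
have PL : P = \bigcup_(j in setT) L j.
  apply/seteqP; split => [p Pp|p [j _ []]//].
  have [j hj] := dyadic_scale (PF.1 p Pp).2.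
  by exists j => //; split; rewrite ?two_rho.
have tL : trivIset setT L.
  move=> i j _ _ [p [[_ hi] [_ hj]]]; rewrite !two_rho in hi hj.
  exact: dyadic_scale_uniq delta0 hi hj.
have f0 p : (0 <= (mass p.1 p.2 `^ q * (2 * p.2) `^ (t + s))%:E)%E.
  by rewrite lee_fin mulr_ge0 ?powR_ge0.
rewrite PL esum_bigcupT// -nneseries_esumT; last by move=> j; exact: esum_ge0.
have th0 : 0 < 2^-1 `^ s by rewrite powR_gt0.
have th1 : 2^-1 `^ s < 1.
  by rewrite powR_lt1// invr_ge0 ler0n invf_lt1 ?ltr1n.
apply: (le_trans _ (nneseries_geometric_le _ _)); last 2 first.
- exact: mulr_ge0 (mulr_ge0 (ltW K_gt0) A_ge0) (powR_ge0 _ _).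
- by rewrite th0 th1.
apply: lee_nneseries => [j _ _|j _]; first exact: esum_ge0.
have rho_lt : 0 < rho j < d.
  rewrite divr_gt0 ?exprn_gt0//= (lt_le_trans _ deltad)// ltr_pdivrMr ?exprn_gt0//.
  by rewrite ltr_pMr// exprn_egt1 ?ltr1n.
apply: le_trans (layer_esum_le PF rho_lt) _; rewrite lee_fin le_eqVlt; apply/orP; left.
rewrite two_rho -exprVn mulrA powR_mulXn ?mulr_ge0 ?invr_ge0 ?ltW//.
by apply/eqP; ring.
Qed.

Lemma Pbar_le_geometric (delta : R) : 0 < delta <= d ->
  (Pbar m q (t + s) F <= (K * A * (2 * delta) `^ s / (1 - 2^-1 `^ s))%:E)%E.
Proof.
move=> delta_d; apply: le_trans.
  by apply: ereal_inf_lbound; exists delta; case/andP: delta_d.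
by apply: ge_ereal_sup => _ [P PF <-]; exact: packing_esum_le.
Qed.

End Layers.

Lemma doubling_mass_le : doubling m -> exists C d, [/\ 1 <= C, 0 < d &
  forall x r, supp m x -> 0 < r < d -> mass x (2 * r) <= C * mass x r].
Proof.
move=> [C [d [d0 hd]]]; exists (Num.max C 1), d; split; rewrite ?le_max ?lexx ?orbT//.
move=> x r sx rd; have r0 := (andP rd).1.
have := hd r x rd sx; rewrite ler_pdivrMr ?mass_gt0// => /le_trans; apply.
by rewrite ler_pM2r ?mass_gt0// le_max lexx.
Qed.

Lemma Cqt_finite_bound q t F : (Cqt m q t F < +oo)%E -> exists A d, [/\ 0 <= A, 0 < d &
  forall r, 0 < r < d -> (Mq m q r F * ((2 * r) `^ t)%:E <= A%:E)%E].
Proof.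
case/ereal_inf_lt => _ [d /= d0 <-]; set y := ereal_sup _ => ylt.
exists (Num.max 0 (fine y)), d; split; rewrite ?le_max ?lexx// => r rd.
apply: (@le_trans _ _ y); first by apply: ereal_sup_ubound; exists r.
by case: y ylt => [y'||] // _; rewrite ?leNye// lee_fin le_max lexx orbT.
Qed.

Lemma Pbar_eq0 q t t' F : doubling m -> F `<=` supp m -> t < t' ->
  (Cqt m q t F < +oo)%E -> Pbar m q t' F = 0%E.
Proof.
move=> dbl Fs tt' /Cqt_finite_bound[A [d1 [A0 d10 hA]]].
have [C [d0 [C1 d00 hC]]] := doubling_mass_le dbl.
pose d := Num.min d0 d1; pose s := t' - t.
have s0 : 0 < s by rewrite subr_gt0.
have th1 : 2^-1 `^ s < 1 by rewrite powR_lt1// invr_ge0 ler0n invf_lt1 ?ltr1n.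
have B0 : 0 <= (C `^ q + 1) * (2 `^ t + 1) * A / (1 - 2^-1 `^ s).
  by rewrite !mulr_ge0 ?addr_ge0 ?powR_ge0 ?invr_ge0 ?subr_ge0// ltW.
apply/eqP; rewrite eq_le Pbar_ge0 andbT; apply/lee_addgt0Pr => e e0; rewrite add0e.
have d_gt0 : 0 < d by rewrite lt_min d00.
have [delta [delta_d small]] := powR_small B0 s0 e0 d_gt0.
rewrite (_ : t' = t + s); last by rewrite addrC subrK.
apply: le_trans (Pbar_le_geometric Fs s0 C1 A0 _ _ delta_d) _.
- move=> x r sx /andP[r0 rd]; apply: hC => //.
  by rewrite r0 (lt_le_trans rd)// ge_min lexx.
- move=> r /andP[r0 rd]; apply: hA.
  by rewrite r0 (lt_le_trans rd)// ge_min lexx orbT.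
- by rewrite lee_fin mulrAC.
Qed.

Lemma OlPqt_eq0 q t t' E : doubling m -> E `<=` supp m -> t < t' ->
  HSPqt m q t E = 0%E -> OlPqt m q t' E = 0%E.
Proof.
move=> dbl Es tt' H0; apply/eqP; rewrite eq_le OlPqt_ge0 andbT.
have : (HSPqt m q t E < 1%:E)%E by rewrite H0 lte_fin.
case/ereal_inf_lt => _ [G /= [EG _] <-] lt1.
have Gfin i : (Cqt m q t (G i) < +oo)%E.
  apply: le_lt_trans (lt_trans lt1 (ltry 1)).
  apply: le_trans (nneseries_lim_ge i.+1 _); last by move=> k _ _; exact: Cqt_ge0.
  by rewrite big_nat_recr//= leeDr// sume_ge0// => k _; exact: Cqt_ge0.
apply: ereal_inf_lbound; exists (fun i => G i `&` E).
  by move=> x Ex; have [i _ Gix] := EG x Ex; exists i.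
rewrite eseries0// => i _ _; apply: Pbar_eq0 tt' _ => //; first by move=> x [_ /Es].
by apply: le_lt_trans (Gfin i); apply: Cqt_subset; exact: subIsetl.
Qed.

End Doubling.

Theorem proposition2p7 (R : realType) (n : nat) (q : R)
  (mu : {measure set (BorelRn R n) -> \bar R}) :
  mu setT = 1%E ->
  compact (supp (mu : set 'rV[R]_n -> \bar R)) ->
  doubling (mu : set 'rV[R]_n -> \bar R) ->
  forall E : set 'rV[R]_n, E `<=` supp (mu : set 'rV[R]_n -> \bar R) ->
    Bq (mu : set 'rV[R]_n -> \bar R) q E = Dimq (mu : set 'rV[R]_n -> \bar R) q E.
Proof.
move=> mu1 supp_compact dbl E Es.
have mu_fin : (mu setT < +oo)%E by rewrite mu1 ltry.
have mass_pos := fine_measure_cball_gt0 mu_fin.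
have mass_mono := fine_measure_cball_le mu_fin.
apply/eqP; rewrite eq_le; apply/andP; split.
- apply: ereal_inf_le_tmp => _ [t /= Ol0 <-]; exists t => //=.
  apply/eqP; rewrite eq_le HSPqt_ge0 andbT -Ol0.
  exact: HSPqt_le_OlPqt (compact_ebounded supp_compact) Es.
- apply: le_ereal_inf_tmp => _ [t /= HS0 <-]; apply/lee_addgt0Pr => e e0.
  apply: ereal_inf_lbound; exists (t + e) => //.
  by apply: (OlPqt_eq0 mass_pos mass_mono dbl Es _ HS0); rewrite ltrDl.
Qed.
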